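(* Let $T>0$ and let $\alpha,\beta:\mathbb{R}\to\mathbb{R}$ be continuous $T$-periodic functions such that $\alpha=0$ on $[\tfrac T2,T]$, $\beta=0$ on $[0,\tfrac T2]$, $\alpha>0$ on $(0,\tfrac T2)$, $\beta>0$ on $(\tfrac T2,T)$, and $\int_0^T\alpha=\int_0^T\beta=:A>0$. Consider the system $u'=\alpha(t)u(1-v)$, $v'=\beta(t)v(-1+u)$. Let $x>0$, let $(u,v)$ be the solution with $u(0)=v(0)=x$, and write $u_k:=u(kT)$, $v_k:=v(kT)$ for $k\ge0$. Fix $n\ge2$ and suppose \[ u_0+u_1+\cdots+u_{n-1}=n,\qquad v_0+v_1+\cdots+v_{n-1}=n . \] Then $u_h=v_{n-h}$ for all $h\in\{1,\ldots,n-1\}$.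
   Context: For $n\ge1$ the $nT$-Poincaré map is $\mathcal{P}_n(u_0,v_0)=(u(nT),v(nT))$ where $(u,v)$ solves the system with $(u(0),v(0))=(u_0,v_0)$. One has $u_n=u_0e^{(n-v_0-\cdots-v_{n-1})A}$ and $v_n=v_0e^{(u_1+\cdots+u_n-n)A}$, so the displayed sum conditions are equivalent to $nT$-periodicity of the solution. *)

From Stdlib Require Import Reals.
From Coquelicot Require Import Coquelicot.
Open Scope R_scope.

Fixpoint rsum (f : nat -> R) (n : nat) : R :=
  match n with
  | O => 0
  | S m => rsum f m + f m
  end.

(* On [0, T/2] the coefficient beta vanishes, so v is frozen and u solves a linear
   equation; on [T/2, T] alpha vanishes, u is frozen and v solves a linear equation.
   Hence the T-map is P (u, v) = (u', v e^((u'-1)A)) with u' = u e^((1-v)A), and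
   u_k, v_k are the iterates of P from (x, x).  P is reversible, P (swap (P p)) = swap p,
   so P is injective and P^j (swap (P^j p)) = swap p.  The two sum conditions say
   exactly that P^n (x, x) = (x, x); since (x, x) is swap-invariant, injectivity of
   P^(n-h) gives P^h (x, x) = swap (P^(n-h) (x, x)). *)


From Stdlib Require Import Reals Lra Lia.
From Coquelicot Require Import Coquelicot.
Open Scope R_scope.

Lemma Rmult_exp_cancel (a b c : R) : b + c = 0 -> a * exp b * exp c = a.
Proof.
  intros Hbc. rewrite Rmult_assoc, <- exp_plus, Hbc, exp_0. ring.
Qed.

Lemma rsum_ext (f g : nat -> R) (n : nat) :
  (forall k, f k = g k) -> rsum f n = rsum g n.
Proof.
  intros Hfg. induction n as [|n IH]; simpl; [reflexivity|]. now rewrite IH, Hfg.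
Qed.

Lemma rsum_shift (f : nat -> R) (n : nat) :
  rsum (fun k => f (S k)) n = rsum f n - f O + f n.
Proof.
  induction n as [|n IH]; simpl; [ring|]. rewrite IH. ring.
Qed.

Definition swap (p : R * R) : R * R := (snd p, fst p).

Lemma swap_swap (p : R * R) : swap (swap p) = p.
Proof.
  now destruct p.
Qed.

Section PoincareMap.

Variable A : R.

Definition poincare (p : R * R) : R * R :=
  let u1 := fst p * exp ((1 - snd p) * A) in (u1, snd p * exp ((u1 - 1) * A)).

Lemma poincare_swap_poincare (p : R * R) :
  poincare (swap (poincare p)) = swap p.
Proof.
  destruct p as [u0 v0]. unfold poincare, swap; simpl.
  rewrite Rmult_exp_cancel by ring.
  f_equal. apply Rmult_exp_cancel. ring.
Qed.

Lemma poincare_inj (p q : R * R) : poincare p = poincare q -> p = q.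
Proof.
  intros Hpq.
  rewrite <- (swap_swap p), <- (swap_swap q), <- (poincare_swap_poincare p),
    <- (poincare_swap_poincare q), Hpq.
  reflexivity.
Qed.

Lemma iter_poincare_inj (k : nat) (p q : R * R) :
  Nat.iter k poincare p = Nat.iter k poincare q -> p = q.
Proof.
  revert p q. induction k as [|k IH]; simpl; intros p q Hpq; [exact Hpq|].
  now apply IH, poincare_inj.
Qed.

Lemma iter_poincare_swap (k : nat) (p : R * R) :
  Nat.iter k poincare (swap (Nat.iter k poincare p)) = swap p.
Proof.
  induction k as [|k IH]; [reflexivity|].
  now rewrite Nat.iter_succ_r, Nat.iter_succ, poincare_swap_poincare.
Qed.

Lemma symmetric_periodic_orbit (n h : nat) (p : R * R) :
  swap p = p -> Nat.iter n poincare p = p -> (h <= n)%nat ->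
  Nat.iter h poincare p = swap (Nat.iter (n - h) poincare p).
Proof.
  intros Hsym Hper Hhn. apply (iter_poincare_inj (n - h)).
  rewrite iter_poincare_swap, <- Nat.iter_add, Nat.sub_add, Hsym by exact Hhn.
  exact Hper.
Qed.

Lemma fst_iter_poincare (m : nat) (p : R * R) :
  fst (Nat.iter m poincare p)
  = fst p * exp ((INR m - rsum (fun k => snd (Nat.iter k poincare p)) m) * A).
Proof.
  induction m as [|m IH].
  - simpl. rewrite Rminus_0_r, Rmult_0_l, exp_0. ring.
  - rewrite S_INR. simpl. rewrite IH, Rmult_assoc, <- exp_plus. f_equal. f_equal. ring.
Qed.

Lemma snd_iter_poincare (m : nat) (p : R * R) :
  snd (Nat.iter m poincare p)
  = snd p * exp ((rsum (fun k => fst (Nat.iter (S k) poincare p)) m - INR m) * A).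
Proof.
  induction m as [|m IH].
  - simpl. rewrite Rminus_0_r, Rmult_0_l, exp_0. ring.
  - rewrite S_INR, Nat.iter_succ. cbn [rsum]. rewrite Nat.iter_succ.
    change (snd (poincare ?q)) with (snd q * exp ((fst (poincare q) - 1) * A)).
    rewrite IH, Rmult_assoc, <- exp_plus. f_equal. f_equal. ring.
Qed.

Lemma iter_poincare_periodic (n : nat) (p : R * R) :
  rsum (fun k => fst (Nat.iter k poincare p)) n = INR n ->
  rsum (fun k => snd (Nat.iter k poincare p)) n = INR n ->
  Nat.iter n poincare p = p.
Proof.
  intros Hsu Hsv.
  assert (Hfst : fst (Nat.iter n poincare p) = fst p).
  { rewrite fst_iter_poincare, Hsv, Rminus_diag, Rmult_0_l, exp_0. ring. }
  assert (Hsnd : snd (Nat.iter n poincare p) = snd p).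
  { rewrite snd_iter_poincare, (rsum_shift (fun k => fst (Nat.iter k poincare p))).
    simpl. rewrite Hsu, Hfst. replace (INR n - fst p + fst p - INR n) with 0 by ring.
    rewrite Rmult_0_l, exp_0. ring. }
  destruct (Nat.iter n poincare p), p. simpl in *. now subst.
Qed.

End PoincareMap.

Lemma is_derive_zero_const (f : R -> R) (a b : R) :
  (forall t, a <= t <= b -> is_derive f t 0) ->
  forall t, a <= t <= b -> f t = f a.
Proof.
  intros Hd t Ht. destruct (Rle_lt_or_eq_dec a t) as [Hat|<-]; [lra| |reflexivity].
  symmetry. apply eq_is_derive; [|exact Hat].
  intros s Hs. apply Hd. lra.
Qed.

Lemma is_derive_RInt_continuous (p : R -> R) (a t : R) :
  (forall s, continuous p s) -> is_derive (fun s => RInt p a s) t (p t).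
Proof.
  intros Hp. apply (is_derive_RInt p _ a); [|apply Hp].
  apply filter_forall. intros b. apply (RInt_correct (V := R_CompleteNormedModule)).
  apply (ex_RInt_continuous (V := R_CompleteNormedModule)). intros; apply Hp.
Qed.

Lemma linear_ode_solution (p f : R -> R) (a b : R) :
  a <= b -> (forall t, continuous p t) ->
  (forall t, a <= t <= b -> is_derive f t (p t * f t)) ->
  f b = f a * exp (RInt p a b).
Proof.
  intros Hab Hp Hf.
  assert (Hd : forall t, a <= t <= b ->
                 is_derive (fun s => f s * exp (- RInt p a s)) t 0).
  { intros t Ht.
    assert (He : is_derive (fun s => exp (- RInt p a s)) t (- p t * exp (- RInt p a t))).
    { exact (is_derive_comp exp (fun s => - RInt p a s) t _ _ (is_derive_exp _)
               (is_derive_opp _ t _ (is_derive_RInt_continuous p a t Hp))). }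
    replace 0 with (p t * f t * exp (- RInt p a t) + f t * (- p t * exp (- RInt p a t)))
      by ring.
    exact (is_derive_mult _ _ _ _ _ (Hf t Ht) He Rmult_comm). }
  assert (Hfb := is_derive_zero_const _ a b Hd b (conj Hab (Rle_refl b))).
  cbv beta in Hfb.
  replace (RInt p a a) with 0 in Hfb by (rewrite RInt_point; reflexivity).
  rewrite Ropp_0, exp_0, Rmult_1_r in Hfb.
  rewrite <- Hfb, Rmult_exp_cancel by ring. reflexivity.
Qed.

Lemma is_derive_shift (f : R -> R) (c t l : R) :
  is_derive f (t + c) l -> is_derive (fun s => f (s + c)) t l.
Proof.
  intros Hf. replace l with (1 * l) by ring.
  apply (is_derive_comp f (fun s => s + c)); [exact Hf|].
  auto_derive; [exact I | ring].
Qed.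

Lemma periodic_shift_INR (f : R -> R) (T : R) :
  (forall t, f (t + T) = f t) -> forall k t, f (t + INR k * T) = f t.
Proof.
  intros Hper k t. induction k as [|k IH].
  - simpl. now rewrite Rmult_0_l, Rplus_0_r.
  - rewrite S_INR, Rmult_plus_distr_r, Rmult_1_l, <- Rplus_assoc, Hper. exact IH.
Qed.

Section PeriodMap.

Variables (T : R) (alpha beta : R -> R).
Hypotheses (HT : 0 < T)
  (Hacont : forall t, continuous alpha t) (Hbcont : forall t, continuous beta t)
  (Ha0 : forall t, T / 2 <= t <= T -> alpha t = 0)
  (Hb0 : forall t, 0 <= t <= T / 2 -> beta t = 0).

Section Solution.

Variables u v : R -> R.
Hypotheses (Hu' : forall t, is_derive u t (alpha t * u t * (1 - v t)))
  (Hv' : forall t, is_derive v t (beta t * v t * (-1 + u t))).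

Lemma v_const_first_half (t : R) : 0 <= t <= T / 2 -> v t = v 0.
Proof.
  apply is_derive_zero_const. intros s Hs.
  replace 0 with (beta s * v s * (-1 + u s)) by (rewrite Hb0 by lra; ring).
  apply Hv'.
Qed.

Lemma u_const_second_half (t : R) : T / 2 <= t <= T -> u t = u T.
Proof.
  assert (Hconst : forall s, T / 2 <= s <= T -> u s = u (T / 2)).
  { apply is_derive_zero_const. intros s Hs.
    replace 0 with (alpha s * u s * (1 - v s)) by (rewrite Ha0 by lra; ring).
    apply Hu'. }
  intros Ht. rewrite (Hconst t Ht), (Hconst T) by lra. reflexivity.
Qed.

Lemma u_after_period : u T = u 0 * exp ((1 - v 0) * RInt alpha 0 T).
Proof.
  rewrite (linear_ode_solution (fun t => (1 - v 0) * alpha t) u 0 T).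
  - f_equal. f_equal. apply (RInt_scal (V := R_CompleteNormedModule)).
    apply (ex_RInt_continuous (V := R_CompleteNormedModule)). intros; apply Hacont.
  - lra.
  - intros t. apply (continuous_scal_r (1 - v 0) alpha), Hacont.
  - intros t Ht. replace ((1 - v 0) * alpha t * u t) with (alpha t * u t * (1 - v t)).
    + apply Hu'.
    + destruct (Rle_lt_dec t (T / 2)).
      * rewrite v_const_first_half by lra. ring.
      * rewrite Ha0 by lra. ring.
Qed.

Lemma v_after_period : v T = v 0 * exp ((u T - 1) * RInt beta 0 T).
Proof.
  rewrite (linear_ode_solution (fun t => (u T - 1) * beta t) v 0 T).
  - f_equal. f_equal. apply (RInt_scal (V := R_CompleteNormedModule)).
    apply (ex_RInt_continuous (V := R_CompleteNormedModule)). intros; apply Hbcont.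
  - lra.
  - intros t. apply (continuous_scal_r (u T - 1) beta), Hbcont.
  - intros t Ht. replace ((u T - 1) * beta t * v t) with (beta t * v t * (-1 + u t)).
    + apply Hv'.
    + destruct (Rle_lt_dec t (T / 2)).
      * rewrite Hb0 by lra. ring.
      * rewrite u_const_second_half by lra. ring.
Qed.

End Solution.

Hypothesis HAeq : RInt alpha 0 T = RInt beta 0 T.

Lemma solution_after_period (u v : R -> R) :
  (forall t, is_derive u t (alpha t * u t * (1 - v t))) ->
  (forall t, is_derive v t (beta t * v t * (-1 + u t))) ->
  (u T, v T) = poincare (RInt alpha 0 T) (u 0, v 0).
Proof.
  intros Hu' Hv'. unfold poincare; simpl.
  rewrite (v_after_period u v), <- HAeq, (u_after_period u v) by assumption.
  reflexivity.
Qed.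

Hypotheses (Haper : forall t, alpha (t + T) = alpha t)
  (Hbper : forall t, beta (t + T) = beta t).

Lemma solution_at_period_multiples (u v : R -> R) :
  (forall t, is_derive u t (alpha t * u t * (1 - v t))) ->
  (forall t, is_derive v t (beta t * v t * (-1 + u t))) ->
  forall k, (u (INR k * T), v (INR k * T))
            = Nat.iter k (poincare (RInt alpha 0 T)) (u 0, v 0).
Proof.
  intros Hu' Hv' k. induction k as [|k IH].
  - simpl. now rewrite Rmult_0_l.
  - rewrite Nat.iter_succ, <- IH.
    assert (Hshift := solution_after_period (fun t => u (t + INR k * T))
                                          (fun t => v (t + INR k * T))).
    cbv beta in Hshift. rewrite !Rplus_0_l in Hshift.
    rewrite S_INR, Rmult_plus_distr_r, Rmult_1_l, Rplus_comm. apply Hshift.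
    + intros t. apply is_derive_shift. rewrite <- (periodic_shift_INR alpha T Haper k t).
      apply Hu'.
    + intros t. apply is_derive_shift. rewrite <- (periodic_shift_INR beta T Hbper k t).
      apply Hv'.
Qed.

End PeriodMap.

Theorem lemma3p1
  (T : R) (alpha beta : R -> R) (x : R) (u v : R -> R) (n : nat)
  (HT : 0 < T)
  (Hacont : forall t, continuous alpha t)
  (Hbcont : forall t, continuous beta t)
  (Haper : forall t, alpha (t + T) = alpha t)
  (Hbper : forall t, beta (t + T) = beta t)
  (Ha0 : forall t, T / 2 <= t <= T -> alpha t = 0)
  (Hb0 : forall t, 0 <= t <= T / 2 -> beta t = 0)
  (Hapos : forall t, 0 < t < T / 2 -> 0 < alpha t)
  (Hbpos : forall t, T / 2 < t < T -> 0 < beta t)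
  (HAeq : RInt alpha 0 T = RInt beta 0 T)
  (HApos : 0 < RInt alpha 0 T)
  (Hx : 0 < x)
  (Hu' : forall t, is_derive u t (alpha t * u t * (1 - v t)))
  (Hv' : forall t, is_derive v t (beta t * v t * (-1 + u t)))
  (Hu0 : u 0 = x) (Hv0 : v 0 = x)
  (Hn : (2 <= n)%nat)
  (Hsu : rsum (fun k => u (INR k * T)) n = INR n)
  (Hsv : rsum (fun k => v (INR k * T)) n = INR n) :
  forall h : nat, (1 <= h <= n - 1)%nat ->
    u (INR h * T) = v (INR (n - h) * T).
Proof.
  intros h Hh.
  set (A := RInt alpha 0 T).
  assert (Horbit : forall k,
            (u (INR k * T), v (INR k * T)) = Nat.iter k (poincare A) (x, x)).
  { intros k. replace (x, x) with (u 0, v 0) by now rewrite Hu0, Hv0.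
    now apply (solution_at_period_multiples T alpha beta). }
  assert (Hfst : forall k, u (INR k * T) = fst (Nat.iter k (poincare A) (x, x)))
    by (intros k; now rewrite <- Horbit).
  assert (Hsnd : forall k, v (INR k * T) = snd (Nat.iter k (poincare A) (x, x)))
    by (intros k; now rewrite <- Horbit).
  assert (Hper : Nat.iter n (poincare A) (x, x) = (x, x)).
  { apply iter_poincare_periodic.
    - rewrite <- Hsu. apply rsum_ext. intros k. symmetry. apply Hfst.
    - rewrite <- Hsv. apply rsum_ext. intros k. symmetry. apply Hsnd. }
  rewrite Hfst, Hsnd, (symmetric_periodic_orbit A n h (x, x))
    by (reflexivity || exact Hper || lia).
  reflexivity.
Qed.
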